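(* Let $c>1$ and $d>1$ be irrational numbers, let $c'_n=[c^{-1}n]$, let $k$ be a nonnegative integer, and for a positive integer $m$ let $x=[cm]$. Then, as $m\to\infty$, \begin{align*} \int_1^x \frac{[d^{-1}([c^{-1}([t]+1)]+k+1)]}{t^2}\,dt =\;& (cd)^{-1}(\log m + \log c + \gamma)+d^{-1}(k+1)\\ & -\sum_{n=1}^\infty \frac{d^{-1}\{c^{-1}(n+1)\}+\{d^{-1}(c'_{n+1}+k+1)\}}{n(n+1)} + O\left(\frac{1}{m}\right), \end{align*} where $\gamma$ is Euler's constant.
   Context: $[x]$ is the greatest integer not exceeding $x$ and $\{x\}=x-[x]$. The implied constant may depend on $c,d,k$. *)

From Stdlib Require Import Reals Lra ZArith.
From Coquelicot Require Import Coquelicot.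
Open Scope R_scope.

Definition flr (x : R) : R := IZR (Int_part x).

Definition frac (x : R) : R := x - flr x.

Definition irrational (x : R) : Prop :=
  forall (p : Z) (q : positive), x <> IZR p / IZR (Zpos q).

Definition euler_gamma : R :=
  real (Lim_seq (fun n : nat => sum_n_m (fun j : nat => / INR j) 1 n - ln (INR n))).

Definition cprime (c : R) (n : nat) : R := flr (/ c * INR n).

(* Cut [1, x] at the integers 1, ..., x = [c m].  On [n, n+1) the integrand is a constant over t^2,
   so the integral is the sum over n < x of f(n) (1/n - 1/(n+1)), where f(n) is the integer part in
   the numerator.  Writing both integer parts in f(n) as "value minus fractional part" splits each
   term into (cd)^{-1}/n, a telescoping term d^{-1}(k+1)(1/n - 1/(n+1)), and the n-th term of the
   series.  The harmonic sum is log x + gamma + O(1/x) with log x = log(cm) + O(1/m), the telescoping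
   sum is d^{-1}(k+1) + O(1/x), and the series terms are O(1/n^2), so their tail beyond x is O(1/m). *)
From Stdlib Require Import Reals Lra Lia ZArith.
From Coquelicot Require Import Coquelicot.
Open Scope R_scope.

Lemma flr_spec (x : R) : flr x <= x /\ x - 1 < flr x.
Proof. unfold flr; destruct (base_Int_part x); lra. Qed.

Lemma frac_bounds (x : R) : 0 <= frac x < 1.
Proof. unfold frac; destruct (flr_spec x); lra. Qed.

Lemma flr_INR_interval (n : nat) (t : R) : INR n <= t < INR n + 1 -> flr t = INR n.
Proof.
  intros Ht; unfold flr; rewrite INR_IZR_INZ; f_equal; symmetry.
  apply Int_part_spec; rewrite <- INR_IZR_INZ; lra.
Qed.

Lemma flr_ge_INR (n : nat) (x : R) :
  INR n <= x -> exists N : nat, (n <= N)%nat /\ flr x = INR N.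
Proof.
  intros Hx; destruct (flr_spec x) as [Hlo Hhi]; unfold flr in *.
  rewrite INR_IZR_INZ in Hx.
  assert (HnZ : (Z.of_nat n <= Int_part x)%Z).
  { assert (Hlt : IZR (Z.of_nat n) - 1 < IZR (Int_part x)) by lra.
    rewrite <- minus_IZR in Hlt; apply lt_IZR in Hlt; lia. }
  exists (Z.to_nat (Int_part x)); split; [lia|].
  rewrite INR_IZR_INZ, Z2Nat.id by lia; reflexivity.
Qed.

Lemma INR_pos (n : nat) : (1 <= n)%nat -> 0 < INR n.
Proof. intros; apply lt_0_INR; lia. Qed.

Lemma Rinv_in_0_1 (x : R) : 1 < x -> 0 < / x < 1.
Proof.
  intros Hx; split; [apply Rinv_0_lt_compat; lra|].
  rewrite <- Rinv_1; apply Rinv_lt_contravar; lra.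
Qed.

Lemma ln_sub_ln_le (x y : R) : 0 < x -> 0 < y -> ln y - ln x <= (y - x) / x.
Proof.
  intros Hx Hy.
  pose proof (exp_ineq1_le (ln (y / x))) as Hexp.
  rewrite exp_ln in Hexp by (apply Rdiv_lt_0_compat; lra).
  rewrite ln_div in Hexp by lra.
  replace ((y - x) / x) with (y / x - 1) by (field; lra); lra.
Qed.

Lemma sum_n_m_Sm_R (a : nat -> R) (n m : nat) :
  (n <= S m)%nat -> sum_n_m a n (S m) = sum_n_m a n m + a (S m).
Proof. exact (sum_n_Sm a n m). Qed.

Definition harmonic (n : nat) : R := sum_n_m (fun j => / INR j) 1 n.

Lemma harmonic_0 : harmonic 0 = 0.
Proof. exact (sum_n_m_zero (fun j => / INR j) 1 0 ltac:(lia)). Qed.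

Lemma harmonic_S (n : nat) : harmonic (S n) = harmonic n + / INR (S n).
Proof. apply sum_n_m_Sm_R; lia. Qed.

Lemma harmonic_sub_ln_decreasing (n p : nat) : (1 <= n)%nat ->
  harmonic (n + p) - ln (INR (n + p)) <= harmonic n - ln (INR n).
Proof.
  intros Hn; induction p as [|p IH]; [rewrite Nat.add_0_r; lra|].
  rewrite Nat.add_succ_r, harmonic_S.
  assert (Hpos : 0 < INR (n + p)) by (apply INR_pos; lia).
  pose proof (ln_sub_ln_le (INR (S (n + p))) (INR (n + p))) as Hln.
  rewrite S_INR in *.
  replace ((INR (n + p) - (INR (n + p) + 1)) / (INR (n + p) + 1))
    with (- / (INR (n + p) + 1)) in Hln by (field; lra).
  specialize (Hln ltac:(lra) Hpos); lra.
Qed.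

Lemma harmonic_sub_ln_succ_increasing (n p : nat) :
  harmonic n - ln (INR (S n)) <= harmonic (n + p) - ln (INR (S (n + p))).
Proof.
  induction p as [|p IH]; [rewrite Nat.add_0_r; lra|].
  rewrite Nat.add_succ_r, harmonic_S.
  pose proof (pos_INR (n + p)) as Hpos.
  pose proof (ln_sub_ln_le (INR (S (n + p))) (INR (S (S (n + p))))) as Hln.
  rewrite !S_INR in *.
  replace ((INR (n + p) + 1 + 1 - (INR (n + p) + 1)) / (INR (n + p) + 1))
    with (/ (INR (n + p) + 1)) in Hln by (field; lra).
  specialize (Hln ltac:(lra) ltac:(lra)); lra.
Qed.

Lemma euler_gamma_bounds (n : nat) : (1 <= n)%nat ->
  harmonic n - ln (INR (S n)) <= euler_gamma <= harmonic n - ln (INR n).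
Proof.
  intros Hn; set (u := fun j : nat => harmonic j - ln (INR j)).
  change euler_gamma with (real (Lim_seq u)).
  assert (Hup : Rbar_le (Lim_seq u) (harmonic n - ln (INR n))).
  { rewrite <- Lim_seq_const; apply Lim_seq_le_loc; exists n; intros m Hm; unfold u.
    replace m with (n + (m - n))%nat by lia; apply harmonic_sub_ln_decreasing, Hn. }
  assert (Hlo : Rbar_le (harmonic n - ln (INR (S n))) (Lim_seq u)).
  { rewrite <- Lim_seq_const; apply Lim_seq_le_loc; exists n; intros m Hm; unfold u.
    replace m with (n + (m - n))%nat by lia.
    pose proof (harmonic_sub_ln_succ_increasing n (m - n)) as Hinc.
    assert (ln (INR (n + (m - n))) <= ln (INR (S (n + (m - n))))).
    { apply ln_le; [apply INR_pos; lia | apply le_INR; lia]. }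
    lra. }
  destruct (Lim_seq u); simpl in *; lra.
Qed.

Lemma harmonic_sub_ln_sub_euler_gamma (p : nat) (y : R) : (1 <= p)%nat ->
  INR (S p) <= y < INR (S p) + 1 ->
  - (4 / INR (S p)) <= harmonic p - ln y - euler_gamma <= 0.
Proof.
  intros Hp Hy; destruct (euler_gamma_bounds p Hp) as [Hg1 Hg2].
  assert (HpR : 1 <= INR p) by (apply (le_INR 1); lia).
  rewrite S_INR in *.
  split.
  - pose proof (ln_sub_ln_le (INR p) y ltac:(lra) ltac:(lra)) as Hln.
    assert ((y - INR p) / INR p <= 2 / INR p).
    { apply Rmult_le_compat_r; [left; apply Rinv_0_lt_compat|]; lra. }
    assert (2 / INR p <= 4 / (INR p + 1)).
    { replace (4 / (INR p + 1)) with (2 / INR p + 2 * (INR p - 1) / (INR p * (INR p + 1)))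
        by (field; lra).
      assert (0 <= 2 * (INR p - 1) / (INR p * (INR p + 1))).
      { apply Rdiv_le_0_compat; nra. }
      lra. }
    lra.
  - assert (ln (INR p + 1) <= ln y) by (apply ln_le; lra); lra.
Qed.

Lemma is_series_inv_telescoping (N : nat) : (1 <= N)%nat ->
  is_series (fun j => / INR (N + j) - / INR (S (N + j))) (/ INR N).
Proof.
  intros HN.
  assert (Hpartial : forall n,
    sum_n (fun j => / INR (N + j) - / INR (S (N + j))) n = / INR N - / INR (S (N + n))).
  { induction n as [|n IH].
    - rewrite sum_O, Nat.add_0_r; reflexivity.
    - rewrite sum_Sn, IH, Nat.add_succ_r; change plus with Rplus; simpl; ring. }
  assert (Hlim : is_lim_seq (fun n => / INR N - / INR (S (N + n))) (/ INR N - 0)).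
  { apply is_lim_seq_minus'; [apply is_lim_seq_const|].
    replace (Finite 0) with (Rbar_inv p_infty) by reflexivity.
    apply is_lim_seq_inv; [|discriminate].
    apply is_lim_seq_ext with (fun n => INR (n + S N)); [intros n; f_equal; lia|].
    apply (is_lim_seq_incr_n INR (S N)), is_lim_seq_INR. }
  rewrite Rminus_0_r in Hlim.
  exact (is_lim_seq_ext _ _ _ (fun n => eq_sym (Hpartial n)) Hlim).
Qed.

Lemma series_sub_partial_sum_bounds (b : nat -> R) (C : R) (p : nat) :
  (forall n, (1 <= n)%nat -> 0 <= b n <= C * (/ INR n - / INR (S n))) -> (1 <= p)%nat ->
  0 <= Series (fun j => b (S j)) - sum_n_m b 1 p <= C / INR (S p).
Proof.
  intros Hb Hp.
  assert (Htele : forall N, (1 <= N)%nat ->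
    is_series (fun j => C * (/ INR (N + j) - / INR (S (N + j)))) (C / INR N)).
  { intros N HN; exact (is_series_scal_l C _ _ (is_series_inv_telescoping N HN)). }
  assert (Hex : ex_series (fun j => b (S j))).
  { apply (@ex_series_le R_AbsRing R_CompleteNormedModule)
      with (fun j => C * (/ INR (1 + j) - / INR (S (1 + j)))).
    - intros j; change (norm (b (S j))) with (Rabs (b (S j))).
      rewrite Rabs_pos_eq by (apply Hb; lia); apply Hb; lia.
    - eexists; exact (Htele 1%nat (le_n 1)). }
  rewrite (Series_incr_n _ p Hp Hex), <- sum_n_Reals.
  replace (sum_n (fun j => b (S j)) (pred p)) with (sum_n_m b 1 p)
    by (unfold sum_n; rewrite sum_n_m_S; f_equal; lia).
  set (T := Series (fun j => b (S (p + j)))).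
  replace (sum_n_m b 1 p + T - sum_n_m b 1 p) with T by ring.
  split.
  - rewrite <- (Rmult_0_l T); unfold T; rewrite <- Series_scal_l.
    apply Series_le; [intros j; rewrite Rmult_0_l; split; [lra | apply Hb; lia]|].
    apply (proj1 (ex_series_incr_n (fun j => b (S j)) p)), Hex.
  - unfold T; rewrite <- (is_series_unique _ _ (Htele (S p) ltac:(lia))).
    apply Series_le; [intros j; apply (Hb (S p + j)%nat); lia|].
    eexists; apply Htele; lia.
Qed.

Lemma is_RInt_step_over_sq (g : R -> R) (p : nat) :
  is_RInt (fun t => g (flr t) / t ^ 2) 1 (INR (S p))
    (sum_n_m (fun n => g (INR n) * (/ INR n - / INR (S n))) 1 p).
Proof.
  induction p as [|p IH].
  - rewrite sum_n_m_zero by lia; exact (is_RInt_point _ 1).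
  - rewrite sum_n_m_Sm_R by lia.
    apply (is_RInt_Chasles _ _ _ _ _ _ IH).
    assert (Hpos : 0 < INR (S p)) by (apply INR_pos; lia).
    rewrite (S_INR (S p)).
    set (v := INR (S p)) in *; set (a := g v).
    apply is_RInt_ext with (fun t => a / t ^ 2).
    { rewrite Rmin_left, Rmax_right by lra; intros t Ht.
      unfold a, v; rewrite (flr_INR_interval (S p) t) by (fold v; lra); reflexivity. }
    replace (a * (/ v - / (v + 1))) with (minus (- a / (v + 1)) (- a / v))
      by (unfold minus, plus, opp; simpl; field; lra).
    apply (is_RInt_derive (fun t => - a / t));
      rewrite Rmin_left, Rmax_right by lra; intros t Ht.
    + auto_derive; [lra | field; lra].
    + apply (ex_derive_continuous (fun t => a / t ^ 2)).
      auto_derive; rewrite Rmult_1_r; apply Rmult_integral_contrapositive_currified; lra.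
Qed.

Section Decomposition.
Variables (c d : R) (k : nat).
Hypotheses (Hc : 0 < c) (Hd : 1 < d).

Definition numerator (x : R) : R := flr (/ d * (flr (/ c * (x + 1)) + INR k + 1)).

Definition defect (n : nat) : R :=
  (/ d * frac (/ c * (INR n + 1)) + frac (/ d * (cprime c (S n) + INR k + 1)))
  / (INR n * (INR n + 1)).

Lemma numerator_term_decomposition (n : nat) : (1 <= n)%nat ->
  numerator (INR n) * (/ INR n - / INR (S n))
  = / (c * d) * / INR n + / d * (INR k + 1) * (/ INR n - / INR (S n)) - defect n.
Proof.
  intros Hn; unfold numerator, defect, frac, cprime.
  pose proof (INR_pos n Hn); rewrite S_INR; field; lra.
Qed.

Lemma defect_bounds (n : nat) : (1 <= n)%nat ->
  0 <= defect n <= 2 * (/ INR n - / INR (S n)).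
Proof.
  intros Hn; unfold defect; rewrite S_INR.
  pose proof (INR_pos n Hn).
  destruct (frac_bounds (/ c * (INR n + 1))), (frac_bounds (/ d * (cprime c (S n) + INR k + 1))).
  pose proof (Rinv_in_0_1 d Hd).
  replace (2 * (/ INR n - / (INR n + 1))) with (2 / (INR n * (INR n + 1))) by (field; lra).
  assert (0 < / (INR n * (INR n + 1))) by (apply Rinv_0_lt_compat; nra).
  unfold Rdiv; split; [apply Rmult_le_pos | apply Rmult_le_compat_r]; nra.
Qed.

Lemma numerator_terms_closed_form (p : nat) :
  / (c * d) * harmonic p + / d * (INR k + 1) * (1 - / INR (S p)) - sum_n_m defect 1 p
  = sum_n_m (fun n => numerator (INR n) * (/ INR n - / INR (S n))) 1 p.
Proof.
  induction p as [|p IH].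
  - rewrite harmonic_0, !sum_n_m_zero by lia.
    change (@zero R_AbelianMonoid) with 0; change (INR 1) with 1; rewrite Rinv_1; ring.
  - rewrite !sum_n_m_Sm_R, <- IH, harmonic_S, numerator_term_decomposition by lia; ring.
Qed.

Lemma integral_numerator_closed_form (p : nat) :
  is_RInt (fun t => numerator (flr t) / t ^ 2) 1 (INR (S p))
    (/ (c * d) * harmonic p + / d * (INR k + 1) * (1 - / INR (S p)) - sum_n_m defect 1 p).
Proof. rewrite numerator_terms_closed_form; apply is_RInt_step_over_sq. Qed.

End Decomposition.

Theorem lemma10 (c d : R) (k : nat) :
  1 < c -> 1 < d -> irrational c -> irrational d ->
  exists (C : R) (M : nat), forall m : nat, (1 <= m)%nat -> (M <= m)%nat ->
    let x := flr (c * INR m) in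
    Rabs (RInt (fun t => flr (/ d * (flr (/ c * (flr t + 1)) + INR k + 1)) / t ^ 2) 1 x
          - ( / (c * d) * (ln (INR m) + ln c + euler_gamma) + / d * (INR k + 1)
              - Series (fun j : nat =>
                  let n := S j in
                  (/ d * frac (/ c * (INR n + 1))
                   + frac (/ d * (cprime c (S n) + INR k + 1)))
                  / (INR n * (INR n + 1)))))
      <= C / INR m.
Proof.
  intros Hc Hd _ _; exists (INR k + 7), 2%nat; intros m _ Hm x.
  change (fun t => flr (/ d * (flr (/ c * (flr t + 1)) + INR k + 1)) / t ^ 2)
    with (fun t => numerator c d k (flr t) / t ^ 2).
  change (Series _) with (Series (fun j => defect c d k (S j))).
  assert (Hm0 : 0 < INR m) by (apply INR_pos; lia).
  destruct (flr_ge_INR m (c * INR m) ltac:(nra)) as [[|p] [HmN Hx]]; [lia|].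
  assert (Hp : (1 <= p)%nat) by lia.
  fold x in Hx; rewrite Hx.
  rewrite (is_RInt_unique _ _ _ _ (integral_numerator_closed_form c d k ltac:(lra) Hd p)).
  pose proof (series_sub_partial_sum_bounds (defect c d k) 2 p
                (defect_bounds c d k Hd) Hp) as HT.
  pose proof (harmonic_sub_ln_sub_euler_gamma p (c * INR m) Hp) as HX.
  rewrite ln_mult in HX by lra.
  destruct (flr_spec (c * INR m)) as [Hx1 Hx2]; unfold x in Hx; rewrite Hx in Hx1, Hx2.
  specialize (HX ltac:(lra)).
  assert (HmSp : INR m <= INR (S p)) by (apply le_INR; lia).
  assert (Hu : 0 < / INR (S p) <= / INR m)
    by (split; [apply Rinv_0_lt_compat | apply Rinv_le_contravar]; lra).
  set (u := / INR (S p)) in *.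
  pose proof (Rinv_in_0_1 (c * d) ltac:(nra)).
  pose proof (Rinv_in_0_1 d Hd).
  set (X := harmonic p - (ln c + ln (INR m)) - euler_gamma) in HX.
  set (T := Series (fun j => defect c d k (S j)) - sum_n_m (defect c d k) 1 p) in HT.
  unfold Rdiv in HT, HX |- *; fold u in HT, HX.
  replace (_ - _) with (/ (c * d) * X - / d * (INR k + 1) * u + T) by (unfold X, T; ring).
  pose proof (pos_INR k).
  assert (- (4 * u) <= / (c * d) * X <= 0) by nra.
  assert (0 <= (INR k + 1) * u) by (apply Rmult_le_pos; lra).
  assert (0 <= / d * (INR k + 1) * u <= (INR k + 1) * u) by (rewrite Rmult_assoc; nra).
  assert ((INR k + 7) * u <= (INR k + 7) * / INR m) by (apply Rmult_le_compat_l; lra).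
  apply Rabs_le; split; lra.
Qed.
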